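(* Let $\Phi$ be any incoherent operation (IO) acting on a single qubit $\mathcal{H}_2$ with respect to the computational basis $\{|1\rangle,|2\rangle\}$. Then $\Phi$ admits a Kraus decomposition $\Phi(\rho)=\sum_{n=1}^4 K_n\rho K_n^\dagger$ consisting of four incoherent Kraus operators of the form $$K_1=\begin{pmatrix} a_1 & b_1\\ 0&0\end{pmatrix},\quad K_2=\begin{pmatrix} 0&0\\ a_2 & b_2\end{pmatrix},\quad K_3=\begin{pmatrix} a_3 & 0\\ 0& b_3\end{pmatrix},\quad K_4=\begin{pmatrix} 0 & b_4\\ a_4& 0\end{pmatrix},$$ where $a_1,\dots,a_4\in\mathbb{R}$ and $b_1,\dots,b_4\in\mathbb{C}$ satisfy $\sum_{i=1}^4 a_i^2=\sum_{j=1}^4|b_j|^2=1$ and $a_1b_1+a_2b_2=0$.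
   Context: Fix an orthonormal basis $\{|i\rangle\}_{i=1}^d$ of $\mathcal{H}_d$. A state is incoherent if it is diagonal in this basis, i.e. of the form $\delta=\sum_{i=1}^d\delta_i|i\rangle\langle i|$ with $\delta_i\ge 0$, $\sum_i\delta_i=1$; let $\mathcal{I}$ denote the set of incoherent states. A completely positive trace-preserving map $\Phi$ is an incoherent operation (IO) if it has a Kraus representation $\Phi(\rho)=\sum_n K_n\rho K_n^\dagger$, $\sum_n K_n^\dagger K_n=I$, such that $K_n\rho K_n^\dagger/\mathrm{Tr}[K_n\rho K_n^\dagger]\in\mathcal{I}$ for all $n$ and all $\rho\in\mathcal{I}$ (whenever the trace is nonzero); such Kraus operators are called incoherent Kraus operators (equivalently, each column of each $K_n$ has at most one nonzero entry). *)

(* complex numbers C := R[i] over an abstract real field R : realType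
   (for R = the reals this is the usual field of complex numbers). *)
From HB Require Import structures.
From mathcomp Require Import all_boot all_order all_algebra.
From mathcomp Require Import complex reals.
Set Implicit Arguments. Unset Strict Implicit. Unset Printing Implicit Defensive.
Import Order.TTheory GRing.Theory Num.Theory.
Local Open Scope ring_scope.

Definition adj_mx (R : realType) m n (A : 'M[R[i]]_(m, n)) : 'M[R[i]]_(n, m) :=
  (map_mx Num.conj A)^T.

Definition incoherent_state (R : realType) d (rho : 'M[R[i]]_d) : Prop :=
  exists delta : 'I_d -> R[i],
    [/\ forall i, 0 <= delta i, \sum_i delta i = 1 &
        rho = \matrix_(i, j) (if i == j then delta i else 0)].

Definition incoherent_kraus (R : realType) d (K : 'M[R[i]]_d) : Prop :=
  forall delta : 'M[R[i]]_d, incoherent_state delta ->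
    let s := K *m delta *m adj_mx K in
    \tr s != 0 -> incoherent_state ((\tr s)^-1 *: s).

Definition incoherent_operation (R : realType) d
    (Phi : 'M[R[i]]_d -> 'M[R[i]]_d) : Prop :=
  exists Ks : seq 'M[R[i]]_d,
    [/\ forall K, K \in Ks -> incoherent_kraus K,
        \sum_(K <- Ks) adj_mx K *m K = 1%:M &
        forall rho, Phi rho = \sum_(K <- Ks) K *m rho *m adj_mx K].

(* the four Kraus operators of the statement; indices 0,1 stand for the
   basis vectors |1>,|2> *)
Definition K1 (R : realType) (a : R) (b : R[i]) : 'M[R[i]]_2 :=
  \matrix_(i < 2, j < 2)
    (if (i == 0 :> nat) then (if (j == 0 :> nat) then a%:C%C else b) else 0).
Definition K2 (R : realType) (a : R) (b : R[i]) : 'M[R[i]]_2 :=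
  \matrix_(i < 2, j < 2)
    (if (i == 1 :> nat) then (if (j == 0 :> nat) then a%:C%C else b) else 0).
Definition K3 (R : realType) (a : R) (b : R[i]) : 'M[R[i]]_2 :=
  \matrix_(i < 2, j < 2)
    (if (i == j) then (if (j == 0 :> nat) then a%:C%C else b) else 0).
Definition K4 (R : realType) (a : R) (b : R[i]) : 'M[R[i]]_2 :=
  \matrix_(i < 2, j < 2)
    (if (i == j) then 0 else (if (j == 0 :> nat) then a%:C%C else b)).

From HB Require Import structures.
From mathcomp Require Import all_boot all_order all_algebra.
From mathcomp Require Import complex reals.
From mathcomp Require Import ring lra.
Set Implicit Arguments. Unset Strict Implicit. Unset Printing Implicit Defensive.
Import Order.TTheory GRing.Theory Num.Theory.
Local Open Scope ring_scope.

(* A Kraus family Ks is determined, both as a map and through sum_K K^dag K,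
   by its Kraus tensor T_{ij,kl} = sum_K K_ik (K_jl)^* (kraus_map_tensor), and
   by Hermitian symmetry half of the entries suffice (kraus_tensor_eq_half).
   An incoherent Kraus operator on a qubit has at most one nonzero entry per
   column (incoherent_kraus_column), so T_{01,kk} = 0 and the tensor reduces to
   the four entry weights P, Q, P', Q', the row coherence
   s = T_{00,01} = - T_{11,01} and the cross terms T_{01,01}, T_{01,10}.
   Cauchy-Schwarz over the operators supported on the relevant entries bounds
   the squared moduli of these by products of disjoint partial weights
   (family_feasible).  A purely real lemma (weight_split_exists: case analysis
   and, in the generic case, the intermediate value theorem for a polynomial)
   then splits the weights so as to match these products; factoring each
   product as a * b^* (rank_one_factor) yields a canonical family with the
   same Kraus tensor (family_canonical), whose trace preservation is exactly
   the normalisation required by the statement (canonical_family_unital). *)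

Section WeightSplit.
Variable R : rcfType.

Lemma quotient_witness (m c b : R) :
  0 <= m -> 0 <= c -> 0 <= b -> c <= m * b -> exists2 t, 0 <= t <= b & m * t = c.
Proof.
move=> m_ge0 c_ge0 b_ge0 c_le.
have [m0|m_neq0] := eqVneq m 0.
  by exists 0; rewrite ?lexx ?b_ge0 // m0 mul0r; apply/le_anti; rewrite c_ge0 -(mul0r b) -m0.
have m_gt0 : 0 < m by rewrite lt0r m_neq0.
exists (c / m); last by rewrite mulrC divfK.
by rewrite divr_ge0 //= ler_pdivrMr // mulrC.
Qed.

Variables (P Q P' Q' r c d : R).

(* Feasible data: parts u <= P, v <= Q' (to be carried by a diagonal operator)
   and u' <= P', v' <= Q (by an antidiagonal one) whose products dominate c and
   d, while the complementary parts in each row dominate r. *)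
Definition split_feasible (u v u' v' : R) : Prop :=
  [/\ 0 <= u <= P, 0 <= v <= Q', 0 <= u' <= P', 0 <= v' <= Q &
      [/\ 0 <= r <= (P - u) * (Q - v'), r <= (P' - u') * (Q' - v),
          0 <= c <= u * v & 0 <= d <= u' * v']].

Definition weight_split (x y z w : R) : Prop :=
  [/\ 0 <= x <= P, 0 <= y <= Q, 0 <= z <= P', 0 <= w <= Q' &
      [/\ x * (Q - y) = r, (P - x) * w = c, z * y = d & (P' - z) * (Q' - w) = r]].

Variables (u v u' v' : R).

(* If d = 0, take z = 0 and solve the chain w -> x -> y. *)
Lemma weight_split_d0 : split_feasible u v u' v' -> d = 0 ->
  exists x y z w, weight_split x y z w.
Proof.
case=> /andP[u_ge0 uP] /andP[v_ge0 vQ'] /andP[u'_ge0 u'P'] /andP[v'_ge0 v'Q].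
case=> /andP[r_ge0 r_le1] r_le2 /andP[c_ge0 c_le] _ d0.
have [t /andP[t_ge0 t_le] eq4] : exists2 t, 0 <= t <= Q' - v & P' * t = r.
  apply: quotient_witness; rewrite ?subr_ge0 //; first lra.
  by apply: le_trans r_le2 _; rewrite ler_wpM2r ?subr_ge0 //; lra.
have [t' /andP[t'_ge0 t'_le] eq2] : exists2 t', 0 <= t' <= u & (Q' - t) * t' = c.
  apply: quotient_witness => //; first lra.
  by apply: le_trans c_le _; rewrite mulrC ler_wpM2r //; lra.
have [t'' /andP[t''_ge0 t''_le] eq1] : exists2 t'', 0 <= t'' <= Q - v' & (P - t') * t'' = r.
  apply: quotient_witness; rewrite ?subr_ge0 //; first lra.
  by apply: le_trans r_le1 _; rewrite ler_wpM2r ?subr_ge0 //; lra.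
exists (P - t'), (Q - t''), 0, (Q' - t); split; try (apply/andP; split); try lra.
by split; rewrite ?d0 ?mul0r ?subr0 ?subKr // mulrC.
Qed.

(* If c = 0, take x = P and solve the chain y -> z -> w. *)
Lemma weight_split_c0 : split_feasible u v u' v' -> c = 0 ->
  exists x y z w, weight_split x y z w.
Proof.
case=> /andP[u_ge0 uP] /andP[v_ge0 vQ'] /andP[u'_ge0 u'P'] /andP[v'_ge0 v'Q].
case=> /andP[r_ge0 r_le1] r_le2 _ /andP[d_ge0 d_le] c0.
have [t /andP[t_ge0 t_le] eq1] : exists2 t, 0 <= t <= Q - v' & P * t = r.
  apply: quotient_witness; rewrite ?subr_ge0 //; first lra.
  by apply: le_trans r_le1 _; rewrite ler_wpM2r ?subr_ge0 //; lra.
have [z /andP[z_ge0 z_le] eq3] : exists2 z, 0 <= z <= u' & (Q - t) * z = d.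
  apply: quotient_witness => //; first lra.
  by apply: le_trans d_le _; rewrite mulrC ler_wpM2r //; lra.
have [t' /andP[t'_ge0 t'_le] eq4] : exists2 t', 0 <= t' <= Q' - v & (P' - z) * t' = r.
  apply: quotient_witness; rewrite ?subr_ge0 //; try lra.
  by apply: le_trans r_le2 _; rewrite ler_wpM2r ?subr_ge0 //; lra.
exists P, (Q - t), z, (Q' - t'); split; try (apply/andP; split); try lra.
by split; rewrite ?c0 ?subrr ?mul0r ?subKr // mulrC.
Qed.

(* If r = 0, take x = 0 and z = P' and solve for y and w independently. *)
Lemma weight_split_r0 : split_feasible u v u' v' -> r = 0 ->
  exists x y z w, weight_split x y z w.
Proof.
case=> /andP[u_ge0 uP] /andP[v_ge0 vQ'] /andP[u'_ge0 u'P'] /andP[v'_ge0 v'Q].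
case=> _ _ /andP[c_ge0 c_le] /andP[d_ge0 d_le] r0.
have [y /andP[y_ge0 y_le] eq3] : exists2 y, 0 <= y <= v' & P' * y = d.
  apply: quotient_witness => //; first lra.
  by apply: le_trans d_le _; rewrite ler_wpM2r.
have [w /andP[w_ge0 w_le] eq2] : exists2 w, 0 <= w <= v & P * w = c.
  apply: quotient_witness => //; first lra.
  by apply: le_trans c_le _; rewrite ler_wpM2r.
exists 0, y, P', w; split; try (apply/andP; split); try lra.
by split; rewrite ?r0 ?subrr ?subr0 ?mul0r.
Qed.

(* The closing polynomial: for a candidate y, put x = r / (Q - y),
   w = c / (P - x) and z = d / y; then the last equation
   (P' - z) * (Q' - w) = r, multiplied by y * (P * (Q - y) - r), reads
   split_poly.[y] = 0. *)
Definition split_poly : {poly R} :=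
  (P'%:P * 'X - d%:P) * (Q'%:P * (P%:P * (Q%:P - 'X) - r%:P) - c%:P * (Q%:P - 'X))
  - r%:P * 'X * (P%:P * (Q%:P - 'X) - r%:P).

Lemma split_polyE t : split_poly.[t] =
  (P' * t - d) * (Q' * (P * (Q - t) - r) - c * (Q - t)) - r * t * (P * (Q - t) - r).
Proof. by rewrite !hornerE. Qed.

(* At y = v' the polynomial is nonnegative: each factor of the first product
   dominates the corresponding part of the feasibility bound on r. *)
Lemma split_poly_at_v' : split_feasible u v u' v' -> 0 <= split_poly.[v'].
Proof.
case=> /andP[u_ge0 uP] /andP[v_ge0 vQ'] /andP[u'_ge0 u'P'] /andP[v'_ge0 v'Q].
case=> /andP[r_ge0 r_le1] r_le2 /andP[c_ge0 c_le] /andP[d_ge0 d_le].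
rewrite split_polyE; set s := Q - v' in r_le1 *; set D := P * s - r.
have s_ge0 : 0 <= s by rewrite subr_ge0.
have D_ge : u * s <= D by move: r_le1; rewrite /D mulrBl; lra.
have D_ge0 : 0 <= D by apply: le_trans D_ge; rewrite mulr_ge0.
have f1 : (P' - u') * v' <= P' * v' - d by rewrite mulrBl lerB.
have f2 : c * s <= v * D.
  apply: le_trans (_ : u * v * s <= _); first by rewrite ler_wpM2r.
  by rewrite mulrAC mulrC ler_wpM2l.
have f3 : (Q' - v) * D <= Q' * D - c * s by rewrite mulrBl lerB.
have f4 : (P' - u') * v' * ((Q' - v) * D) <= (P' * v' - d) * (Q' * D - c * s).
  by apply: ler_pM f1 f3; apply: mulr_ge0 => //; rewrite subr_ge0.
have f5 : r * v' * D <= (P' - u') * v' * ((Q' - v) * D).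
  by rewrite mulrA ler_wpM2r // mulrAC ler_wpM2r.
by rewrite subr_ge0; apply: le_trans f4.
Qed.

(* At y = d / P' the first product vanishes and the polynomial is nonpositive. *)
Lemma split_poly_at_y0 : split_feasible u v u' v' -> 0 < P' ->
  split_poly.[d / P'] <= 0 /\ d / P' <= v'.
Proof.
case=> /andP[u_ge0 uP] _ /andP[u'_ge0 u'P'] /andP[v'_ge0 v'Q].
case=> /andP[r_ge0 r_le1] _ _ /andP[d_ge0 d_le] P'_gt0.
have y0_le : d / P' <= v'.
  by rewrite ler_pdivrMr // mulrC; apply: le_trans d_le _; rewrite ler_wpM2r.
have y0E : P' * (d / P') = d by rewrite mulrC divfK ?gt_eqF.
split => //; rewrite split_polyE y0E subrr mul0r sub0r oppr_le0.
have y0_ge0 : 0 <= d / P' by rewrite divr_ge0 // ltW.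
apply: mulr_ge0; first exact: mulr_ge0.
rewrite subr_ge0.
apply: le_trans r_le1 _.
by apply: ler_pM; rewrite ?subr_ge0 ?gerBl ?lerD2l ?lerN2.
Qed.

(* A root y of split_poly in the admissible range determines the solution
   x = r / (Q - y), z = d / y, w = c (Q - y) / (P (Q - y) - r). *)
Lemma weight_split_of_root y : 0 < r -> 0 <= c -> 0 <= d ->
  0 < y -> 0 < Q - y -> d <= P' * y -> r < P * (Q - y) -> split_poly.[y] = 0 ->
  exists x z w, weight_split x y z w.
Proof.
move=> r_gt0 c_ge0 d_ge0 y_gt0 s_gt0 dy r_lt; rewrite split_polyE => root_y.
have D_gt0 : 0 < P * (Q - y) - r by rewrite subr_gt0.
pose x := r / (Q - y); pose z := d / y; pose w := c * (Q - y) / (P * (Q - y) - r).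
have eq1 : x * (Q - y) = r by rewrite divfK ?gt_eqF.
have eq2 : (P - x) * w = c by rewrite /w /x; field; rewrite !gt_eqF.
have eq3 : z * y = d by rewrite divfK ?gt_eqF.
have eq4 : (P' - z) * (Q' - w) = r.
  apply: (mulIf (mulf_neq0 (lt0r_neq0 y_gt0) (lt0r_neq0 D_gt0))).
  have -> : (P' - z) * (Q' - w) * (y * (P * (Q - y) - r)) =
      (P' * y - d) * (Q' * (P * (Q - y) - r) - c * (Q - y)).
    by rewrite /z /w; field; rewrite !gt_eqF.
  by apply/eqP; rewrite -subr_eq0 -root_y; apply/eqP; ring.
have z_le : z <= P' by rewrite ler_pdivrMr.
have w_le : w <= Q'.
  have Pz_gt0 : 0 < P' - z.
    by rewrite lt0r subr_ge0 z_le andbT; apply/eqP=> e; move: eq4; rewrite e mul0r; lra.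
  by rewrite -subr_ge0 ltW // -(pmulr_rgt0 _ Pz_gt0) eq4.
exists x, z, w; split; rewrite ?z_le ?w_le ?andbT //; try (apply/andP; split).
- by rewrite divr_ge0 ?ltW.
- by rewrite ler_pdivrMr // ltW.
- by rewrite ltW.
- by rewrite -subr_ge0 ltW.
- by rewrite divr_ge0 // ltW.
- by apply: divr_ge0; [rewrite mulr_ge0 // ltW | rewrite ltW].
Qed.

(* Generic case r, c, d > 0: split_poly changes sign on [d / P', v'], and its
   root there is admissible. *)
Lemma weight_split_pos : split_feasible u v u' v' -> 0 < r -> 0 < c -> 0 < d ->
  exists x y z w, weight_split x y z w.
Proof.
move=> feas r_gt0 c_gt0 d_gt0.
have feas' := feas; case: feas' => /andP[u_ge0 uP] _ /andP[u'_ge0 u'P'] /andP[_ v'Q].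
case=> /andP[_ r_le1] _ /andP[_ c_le] /andP[_ d_le].
have u_gt0 : 0 < u.
  by rewrite lt0r u_ge0 andbT; apply/eqP=> u0; move: c_le; rewrite u0 mul0r; lra.
have u'_gt0 : 0 < u'.
  by rewrite lt0r u'_ge0 andbT; apply/eqP=> u0; move: d_le; rewrite u0 mul0r; lra.
have Qv'_gt0 : 0 < Q - v'.
  by rewrite lt0r subr_ge0 v'Q andbT; apply/eqP=> e; move: r_le1; rewrite e mulr0; lra.
have P'_gt0 : 0 < P' by apply: lt_le_trans u'P'.
have [h_y0 y0_le] := split_poly_at_y0 feas P'_gt0.
have [y /andP[y0_y y_le] /rootP root_y] :
    exists2 y, d / P' <= y <= v' & root split_poly y.
  by apply: poly_ivt; [apply: le_trans y0_le | rewrite h_y0 split_poly_at_v'].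
have s_gt0 : 0 < Q - y by lra.
have r_lt : r < P * (Q - y).
  have r_le : r <= (P - u) * (Q - y).
    by apply: le_trans r_le1 _; rewrite ler_wpM2l ?subr_ge0 // lerB.
  have : 0 < u * (Q - y) by rewrite mulr_gt0.
  by move: r_le; rewrite mulrBl; lra.
have [x [z [w sol]]] : exists x z w, weight_split x y z w.
  apply: (weight_split_of_root r_gt0 (ltW c_gt0) (ltW d_gt0)) => //.
  - by apply: lt_le_trans y0_y; rewrite divr_gt0.
  - by rewrite mulrC -ler_pdivrMr.
by exists x, y, z, w.
Qed.

Lemma weight_split_exists : split_feasible u v u' v' -> exists x y z w, weight_split x y z w.
Proof.
move=> feas; have [_ _ _ _ [/andP[r_ge0 _] _ /andP[c_ge0 _] /andP[d_ge0 _]]] := feas.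
have [d0|d_neq0] := eqVneq d 0; first exact: weight_split_d0.
have [c0|c_neq0] := eqVneq c 0; first exact: weight_split_c0.
have [r0|r_neq0] := eqVneq r 0; first exact: weight_split_r0.
by apply: weight_split_pos; rewrite // lt0r ?r_neq0 ?c_neq0 ?d_neq0.
Qed.

End WeightSplit.

Section SquaredModulus.
Variable R : rcfType.

Definition sqnorm (z : R[i]) : R := complex.Re z ^+ 2 + complex.Im z ^+ 2.

Lemma sqnorm_ge0 z : 0 <= sqnorm z.
Proof. by rewrite addr_ge0 ?sqr_ge0. Qed.

Lemma mulcJ_sqnorm z : z * z^*%C = (sqnorm z)%:C%C.
Proof. by case: z => a b; rewrite /sqnorm /=; simpc; congr (_ +i* _)%C; ring. Qed.

Lemma sqnormM u v : sqnorm (u * v) = sqnorm u * sqnorm v.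
Proof. by case: u => a b; case: v => c d; rewrite /sqnorm /=; ring. Qed.

Lemma sqnormJ u : sqnorm u^*%C = sqnorm u.
Proof. by case: u => a b; rewrite /sqnorm /=; ring. Qed.

Lemma sqnormN u : sqnorm (- u) = sqnorm u.
Proof. by case: u => a b; rewrite /sqnorm /=; ring. Qed.

Lemma sqnorm_real (a : R) : sqnorm a%:C%C = a ^+ 2.
Proof. by rewrite /sqnorm /=; ring. Qed.

Lemma sqnorm_eq0 z : sqnorm z = 0 -> z = 0.
Proof.
case: z => a b; rewrite /sqnorm /= => /eqP.
by rewrite paddr_eq0 ?sqr_ge0 // !sqrf_eq0 => /andP[/eqP-> /eqP->].
Qed.

(* One step of Cauchy-Schwarz: adding a term t with |t|^2 = nu * nv to a sum
   S with |S|^2 <= A * B keeps the bound, since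
   2 Re (S t^* ) <= 2 |S| |t| <= A * nv + B * nu. *)
Lemma sqnormD_le (S t : R[i]) (A B nu nv : R) :
  0 <= A -> 0 <= B -> 0 <= nu -> 0 <= nv ->
  sqnorm S <= A * B -> sqnorm t = nu * nv -> sqnorm (t + S) <= (nu + A) * (nv + B).
Proof.
move=> A_ge0 B_ge0 nu_ge0 nv_ge0 S_le t_eq.
set X := complex.Re S * complex.Re t + complex.Im S * complex.Im t.
have sqnormD : sqnorm (t + S) = sqnorm t + sqnorm S + 2 * X.
  by rewrite /X; case: (S) => a b; case: (t) => c e; rewrite /sqnorm /=; ring.
have X_le : X ^+ 2 <= sqnorm S * sqnorm t.
  rewrite /X /sqnorm.
  by have := sqr_ge0 (complex.Re S * complex.Im t - complex.Im S * complex.Re t); nra.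
have SB : sqnorm S * sqnorm t <= A * B * (nu * nv).
  by rewrite -t_eq ler_wpM2r ?sqnorm_ge0.
have AM_GM : 4 * (A * B * (nu * nv)) <= (A * nv + B * nu) ^+ 2.
  by have := sqr_ge0 (A * nv - B * nu); nra.
have W_ge0 : 0 <= A * nv + B * nu by rewrite addr_ge0 ?mulr_ge0.
have X2_le : 2 * X <= A * nv + B * nu by nra.
by rewrite sqnormD t_eq; nra.
Qed.

Lemma sqnorm_sum_le (T : Type) (s : seq T) (F : pred T) (f g : T -> R[i]) :
  sqnorm (\sum_(t <- s | F t) f t * (g t)^*%C) <=
  (\sum_(t <- s | F t) sqnorm (f t)) * (\sum_(t <- s | F t) sqnorm (g t)).
Proof.
elim: s => [|t s IH]; first by rewrite !big_nil mulr0 /sqnorm /= expr0n addr0.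
rewrite !big_cons; case: (F t) => //.
by apply: sqnormD_le; rewrite ?sumr_ge0 ?sqnormM ?sqnormJ // => *; apply: sqnorm_ge0.
Qed.

Lemma rank_one_factor (x e : R) (s : R[i]) : 0 <= x -> 0 <= e -> sqnorm s = x * e ->
  exists (a : R) (b : R[i]), [/\ a ^+ 2 = x, sqnorm b = e & a%:C%C * b^*%C = s].
Proof.
move=> x_ge0 e_ge0 s_eq.
have [x0|x_neq0] := eqVneq x 0.
  exists 0, (Num.sqrt e)%:C%C; split; rewrite ?x0 ?expr0n ?sqnorm_real ?sqr_sqrtr //.
  by rewrite mul0r; apply/esym/sqnorm_eq0; rewrite s_eq x0 mul0r.
have a_gt0 : 0 < Num.sqrt x by rewrite sqrtr_gt0 lt0r x_neq0.
exists (Num.sqrt x), (s * (Num.sqrt x)^-1%:C%C)^*%C; split; rewrite ?sqr_sqrtr //.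
  by rewrite sqnormJ sqnormM sqnorm_real exprVn sqr_sqrtr // s_eq mulrAC divff ?mul1r.
by rewrite conjcK mulrCA -rmorphM divff ?mulr1 ?gt_eqF.
Qed.

End SquaredModulus.

Section KrausTensor.
Variables (R : realType) (n : nat).
Implicit Types (Ks : seq 'M[R[i]]_n) (rho : 'M[R[i]]_n).

(* The Kraus tensor T_{ij,kl} = sum_K K_ik (K_jl)^* determines the map
   rho |-> sum_K K rho K^dag (its Choi matrix, up to reshaping). *)
Definition kraus_tensor Ks (i j k l : 'I_n) : R[i] :=
  \sum_(K <- Ks) K i k * (K j l)^*%C.

Lemma kraus_tensorJ Ks i j k l : kraus_tensor Ks j i l k = (kraus_tensor Ks i j k l)^*%C.
Proof.
rewrite /kraus_tensor rmorph_sum; apply: eq_bigr => K _ /=.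
by rewrite rmorphM /= conjcK mulrC.
Qed.

Lemma kraus_tensor_diag Ks i k :
  kraus_tensor Ks i i k k = (\sum_(K <- Ks) sqnorm (K i k))%:C%C.
Proof.
by rewrite /kraus_tensor rmorph_sum; apply: eq_bigr => K _; rewrite mulcJ_sqnorm.
Qed.

Lemma kraus_map_entry Ks rho i j :
  (\sum_(K <- Ks) K *m rho *m adj_mx K) i j =
  \sum_k \sum_l rho k l * kraus_tensor Ks i j k l.
Proof.
rewrite summxE.
transitivity (\sum_(K <- Ks) \sum_k \sum_l rho k l * (K i k * (K j l)^*%C)).
  apply: eq_bigr => K _; rewrite mxE exchange_big /=; apply: eq_bigr => l _.
  by rewrite !mxE mulr_suml; apply: eq_bigr => k _; ring.
rewrite exchange_big; apply: eq_bigr => k _; rewrite exchange_big; apply: eq_bigr => l _.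
by rewrite /kraus_tensor mulr_sumr.
Qed.

Lemma kraus_unit_entry Ks k l :
  (\sum_(K <- Ks) adj_mx K *m K) k l = \sum_i kraus_tensor Ks i i l k.
Proof.
rewrite summxE /kraus_tensor exchange_big; apply: eq_bigr => K _.
by rewrite mxE; apply: eq_bigr => i _; rewrite !mxE mulrC.
Qed.

Lemma kraus_map_tensor Ks Ks' :
  (forall i j k l : 'I_n, kraus_tensor Ks i j k l = kraus_tensor Ks' i j k l) ->
  (forall rho, \sum_(K <- Ks) K *m rho *m adj_mx K = \sum_(K <- Ks') K *m rho *m adj_mx K) /\
  \sum_(K <- Ks) adj_mx K *m K = \sum_(K <- Ks') adj_mx K *m K.
Proof.
move=> eqT; split => [rho|]; apply/matrixP => i j.
  by rewrite !kraus_map_entry; apply: eq_bigr => k _; apply: eq_bigr => l _; rewrite eqT.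
by rewrite !kraus_unit_entry; apply: eq_bigr => k _; rewrite eqT.
Qed.

(* By the symmetry kraus_tensorJ, a Kraus tensor is determined by its entries
   with (i, k) <= (j, l) in the lexicographic order. *)
Lemma kraus_tensor_eq_half Ks Ks' :
  (forall i j k l : 'I_n, (i < j)%N || (i == j) && (k <= l)%N ->
     kraus_tensor Ks i j k l = kraus_tensor Ks' i j k l) ->
  forall i j k l : 'I_n, kraus_tensor Ks i j k l = kraus_tensor Ks' i j k l.
Proof.
move=> eqT i j k l.
have [ij|ji|/val_inj ij] := ltngtP i j.
- by apply: eqT; rewrite ij.
- by rewrite -[LHS]conjcK -kraus_tensorJ eqT ?ji // kraus_tensorJ conjcK.
- rewrite -ij; have [kl|lk] := leqP k l; first by apply: eqT; rewrite eqxx kl orbT.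
  by rewrite -[LHS]conjcK -kraus_tensorJ eqT ?eqxx ?(ltnW lk) ?orbT // kraus_tensorJ conjcK.
Qed.

End KrausTensor.

Definition i0 : 'I_2 := @Ordinal 2 0 isT.
Definition i1 : 'I_2 := @Ordinal 2 1 isT.

Lemma ord2 (i : 'I_2) : i = i0 \/ i = i1.
Proof. by case: i => [[|[|//]] Hi]; [left|right]; apply: val_inj. Qed.

Lemma big_ord2 (V : nmodType) (F : 'I_2 -> V) : \sum_(i < 2) F i = F i0 + F i1.
Proof. by rewrite big_ord_recl big_ord1; congr (F _ + F _); apply: val_inj. Qed.

(* An incoherent Kraus operator on a qubit has at most one nonzero entry in
   each column: it maps the incoherent state |j><j| to a multiple of
   K|j><j|K^dag, whose off-diagonal entry is K_0j (K_1j)^*. *)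
Lemma incoherent_kraus_column (R : realType) (K : 'M[R[i]]_2) (j : 'I_2) :
  incoherent_kraus K -> K i0 j = 0 \/ K i1 j = 0.
Proof.
move=> incK.
pose delta : 'M[R[i]]_2 := \matrix_(i, k) (if i == k then (i == j)%:R else 0).
have delta_inc : incoherent_state delta.
  exists (fun i => (i == j)%:R); split => [i | | //]; first exact: ler0n.
  by rewrite (bigD1 j) //= eqxx big1 ?addr0 // => i /negPf ->.
have sE a b : (K *m delta *m adj_mx K) a b = K a j * (K b j)^*%C.
  rewrite /adj_mx !mxE big_ord2 !mxE !big_ord2 !mxE.
  by case: (ord2 j) => ->; rewrite /= ?mulr1n ?mulr0n; ring.
have trE : \tr (K *m delta *m adj_mx K) = (sqnorm (K i0 j) + sqnorm (K i1 j))%:C%C.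
  by rewrite /mxtrace big_ord2 !sE !mulcJ_sqnorm -rmorphD.
have [tr0|tr_neq0] := eqVneq (\tr (K *m delta *m adj_mx K)) 0.
  left; apply: sqnorm_eq0; apply/le_anti; rewrite sqnorm_ge0 andbT.
  have := sqnorm_ge0 (K i1 j); move: tr0; rewrite trE => /complexI; lra.
have [d [_ _ sN]] := incK delta delta_inc tr_neq0.
have := congr1 (fun A : 'M_2 => A i0 i1) sN => /= off.
rewrite [LHS]mxE sE [RHS]mxE /= in off.
move/eqP: off; rewrite !mulf_eq0 invr_eq0 (negPf tr_neq0) conjc_eq0 /=.
by case/orP=> /eqP; [left | right].
Qed.

(* Keep complex conjugation folded when computing entries of explicit matrices. *)
#[local] Arguments conjc {R} x : simpl never.

Section CanonicalFamily.
Variable R : realType.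
Variables (a1 a2 a3 a4 : R) (b1 b2 b3 b4 : R[i]).

Definition canonical_family : seq 'M[R[i]]_2 :=
  [:: K1 a1 b1; K2 a2 b2; K3 a3 b3; K4 a4 b4].

Lemma canonical_family_map rho :
  \sum_(K <- canonical_family) K *m rho *m adj_mx K =
  K1 a1 b1 *m rho *m adj_mx (K1 a1 b1) + K2 a2 b2 *m rho *m adj_mx (K2 a2 b2)
  + K3 a3 b3 *m rho *m adj_mx (K3 a3 b3) + K4 a4 b4 *m rho *m adj_mx (K4 a4 b4).
Proof. by rewrite !big_cons big_nil addr0 !addrA. Qed.

Lemma canonical_family_unital :
  \sum_(K <- canonical_family) adj_mx K *m K = 1%:M ->
  [/\ a1 ^+ 2 + a2 ^+ 2 + a3 ^+ 2 + a4 ^+ 2 = 1,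
      `|b1| ^+ 2 + `|b2| ^+ 2 + `|b3| ^+ 2 + `|b4| ^+ 2 = 1 &
      a1%:C%C * b1 + a2%:C%C * b2 = 0].
Proof.
move/matrixP=> unital.
have entry k l : (\sum_(K <- canonical_family) adj_mx K *m K) k l =
    \sum_(K <- canonical_family) ((K i0 k)^*%C * K i0 l + (K i1 k)^*%C * K i1 l).
  by rewrite summxE; apply: eq_bigr => K _; rewrite !mxE big_ord2 !mxE.
have := unital i0 i0; have := unital i1 i1; have := unital i0 i1.
rewrite !entry !big_cons !big_nil !mxE /= !conjc_real ?conjc0 ?mulr1n ?mulr0n => e01 e11 e00.
split.
- have : (a1 ^+ 2 + a2 ^+ 2 + a3 ^+ 2 + a4 ^+ 2)%:C%C = 1 :> R[i].
    by rewrite -e00 !rmorphD !rmorphXn /=; ring.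
  by move/complexI.
- by rewrite -e11 !normCK; ring.
- by rewrite -e01; ring.
Qed.

End CanonicalFamily.

Section IncoherentQubitFamily.
Variable R : realType.
Local Notation M := 'M[R[i]]_2.

Definition supported_at (i k j l : 'I_2) : pred M :=
  fun K => (K i k != 0) && (K j l != 0).

Variable Ks : seq M.
Hypothesis Ks_incoherent : forall K, K \in Ks -> incoherent_kraus K.
Hypothesis Ks_unital : \sum_(K <- Ks) adj_mx K *m K = 1%:M.

Local Notation T := (kraus_tensor Ks).

Definition weight (i k : 'I_2) : R := \sum_(K <- Ks) sqnorm (K i k).
Definition class_weight (F : pred M) (i k : 'I_2) : R :=
  \sum_(K <- Ks | F K) sqnorm (K i k).

Lemma class_weight_ge0 (F : pred M) (i k : 'I_2) : 0 <= class_weight F i k.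
Proof. by apply: sumr_ge0 => K _; apply: sqnorm_ge0. Qed.

Lemma column_exclusive (K : M) (c : 'I_2) :
  K \in Ks -> K i0 c != 0 -> K i1 c != 0 -> False.
Proof.
move=> /Ks_incoherent /(incoherent_kraus_column c).
by case=> ->; rewrite eqxx.
Qed.

Lemma tensor_diag (i k : 'I_2) : T i i k k = (weight i k)%:C%C.
Proof. exact: kraus_tensor_diag. Qed.

(* The (1, 0) entry of sum_K K^dag K = 1 says that the coherences of the two
   rows cancel. *)
Lemma row_coherence : T i1 i1 i0 i1 = - T i0 i0 i0 i1.
Proof.
apply/eqP; rewrite -addr_eq0 addrC.
by have := kraus_unit_entry Ks i1 i0; rewrite Ks_unital big_ord2 !mxE /= mulr0n => <-.
Qed.

(* No operator of the family has two nonzero entries in one column. *)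
Lemma tensor_cross_diag (k : 'I_2) : T i0 i1 k k = 0.
Proof.
rewrite /kraus_tensor big1_seq // => K /= KKs.
have [K0|K0] := eqVneq (K i0 k) 0; first by rewrite K0 mul0r.
have [K1|K1] := eqVneq (K i1 k) 0; first by rewrite K1 conjc0 mulr0.
by case: (column_exclusive KKs K0 K1).
Qed.

(* Cauchy-Schwarz restricted to the operators contributing to T_{ij,kl}. *)
Lemma tensor_support_bound (i j k l : 'I_2) :
  sqnorm (T i j k l) <=
  class_weight (supported_at i k j l) i k * class_weight (supported_at i k j l) j l.
Proof.
have -> : T i j k l = \sum_(K <- Ks | supported_at i k j l K) K i k * (K j l)^*%C.
  rewrite /kraus_tensor [RHS]big_mkcond /=; apply: eq_bigr => K _.
  by case: ifPn => //; rewrite negb_and !negbK => /orP[] /eqP ->; rewrite ?mul0r ?conjc0 ?mulr0.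
exact: sqnorm_sum_le.
Qed.

Lemma class_weight_disjoint (F G : pred M) (i k : 'I_2) :
  (forall K, K \in Ks -> F K -> G K -> False) ->
  class_weight F i k + class_weight G i k <= weight i k.
Proof.
move=> disj; rewrite /class_weight (big_mkcond F) (big_mkcond G) -big_split /=.
rewrite big_seq [leRHS]big_seq; apply: ler_sum => K KKs.
case: ifPn => [FK|_]; case: ifPn => [GK|_]; rewrite ?addr0 ?add0r ?sqnorm_ge0 //.
by case: (disj K KKs FK GK).
Qed.

Local Notation row_full r := (supported_at r i0 r i1).
Local Notation diag_full := (supported_at i0 i0 i1 i1).
Local Notation antidiag_full := (supported_at i0 i1 i1 i0).

Lemma family_feasible :
  split_feasible (weight i0 i0) (weight i0 i1) (weight i1 i0) (weight i1 i1)
    (sqnorm (T i0 i0 i0 i1)) (sqnorm (T i0 i1 i0 i1)) (sqnorm (T i0 i1 i1 i0))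
    (class_weight diag_full i0 i0) (class_weight diag_full i1 i1)
    (class_weight antidiag_full i1 i0) (class_weight antidiag_full i0 i1).
Proof.
have d1 : class_weight (row_full i0) i0 i0 + class_weight diag_full i0 i0 <= weight i0 i0.
  apply: class_weight_disjoint => K KKs /andP[_ r01] /andP[_ d11].
  exact: column_exclusive KKs r01 d11.
have d2 : class_weight (row_full i0) i0 i1 + class_weight antidiag_full i0 i1 <= weight i0 i1.
  apply: class_weight_disjoint => K KKs /andP[r00 _] /andP[_ a10].
  exact: column_exclusive KKs r00 a10.
have d3 : class_weight (row_full i1) i1 i0 + class_weight antidiag_full i1 i0 <= weight i1 i0.
  apply: class_weight_disjoint => K KKs /andP[_ r11] /andP[a01 _].
  exact: column_exclusive KKs a01 r11.
have d4 : class_weight (row_full i1) i1 i1 + class_weight diag_full i1 i1 <= weight i1 i1.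
  apply: class_weight_disjoint => K KKs /andP[r10 _] /andP[d00 _].
  exact: column_exclusive KKs d00 r10.
have r_le1 := tensor_support_bound i0 i0 i0 i1.
have r_le2 := tensor_support_bound i1 i1 i0 i1; rewrite row_coherence sqnormN in r_le2.
have c_le := tensor_support_bound i0 i1 i0 i1.
have d_le := tensor_support_bound i0 i1 i1 i0; rewrite [X in _ <= X]mulrC in d_le.
have cw0 := class_weight_ge0.
have p1 := cw0 (row_full i0) i0 i0; have q1 := cw0 (row_full i0) i0 i1.
have p2 := cw0 (row_full i1) i1 i0; have q2 := cw0 (row_full i1) i1 i1.
split; rewrite ?cw0 ?sqnorm_ge0 ?c_le ?d_le //=; try lra; split => //.
- by apply: le_trans r_le1 (ler_pM p1 q1 _ _); lra.
- by apply: le_trans r_le2 (ler_pM p2 q2 _ _); lra.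
Qed.

(* Factoring the four balanced products of weight_split_exists as rank-one
   products a * b^* yields real a_n and complex b_n reproducing the weights
   and the coherences of the family. *)
Lemma family_parameters : exists (a1 a2 a3 a4 : R) (b1 b2 b3 b4 : R[i]),
  [/\ a1 ^+ 2 + a3 ^+ 2 = weight i0 i0, a2 ^+ 2 + a4 ^+ 2 = weight i1 i0,
      sqnorm b1 + sqnorm b4 = weight i0 i1, sqnorm b2 + sqnorm b3 = weight i1 i1 &
      [/\ a1%:C%C * b1^*%C = T i0 i0 i0 i1, a2%:C%C * b2^*%C = T i1 i1 i0 i1,
          a3%:C%C * b3^*%C = T i0 i1 i0 i1 & b4 * a4%:C%C = T i0 i1 i1 i0]].
Proof.
have [x [y [z [w]]]] := weight_split_exists family_feasible.
case=> /andP[x_ge0 xP] /andP[y_ge0 yQ] /andP[z_ge0 zP'] /andP[w_ge0 wQ'] [e1 e2 e3 e4].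
rewrite -(sqnormN (T i0 i0 i0 i1)) -row_coherence in e4.
rewrite -sqnormJ in e3.
have Px : 0 <= weight i0 i0 - x by rewrite subr_ge0.
have Qy : 0 <= weight i0 i1 - y by rewrite subr_ge0.
have P'z : 0 <= weight i1 i0 - z by rewrite subr_ge0.
have Q'w : 0 <= weight i1 i1 - w by rewrite subr_ge0.
have [a1 [b1 [a1E b1E ab1]]] := rank_one_factor x_ge0 Qy (esym e1).
have [a3 [b3 [a3E b3E ab3]]] := rank_one_factor Px w_ge0 (esym e2).
have [a2 [b2 [a2E b2E ab2]]] := rank_one_factor P'z Q'w (esym e4).
have [a4 [b4 [a4E b4E ab4]]] := rank_one_factor z_ge0 y_ge0 (esym e3).
exists a1, a2, a3, a4, b1, b2, b3, b4; split; last split=> //.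
- by rewrite a1E a3E addrC subrK.
- by rewrite a2E a4E subrK.
- by rewrite b1E b4E subrK.
- by rewrite b2E b3E subrK.
- by rewrite -[RHS]conjcK -ab4 rmorphM /= conjcK conjc_real mulrC.
Qed.

Lemma family_canonical : exists (a1 a2 a3 a4 : R) (b1 b2 b3 b4 : R[i]),
  forall i j k l,
    T i j k l = kraus_tensor (canonical_family a1 a2 a3 a4 b1 b2 b3 b4) i j k l.
Proof.
have [a1 [a2 [a3 [a4 [b1 [b2 [b3 [b4 [wa13 wa24 wb14 wb23 [t1 t2 t3 t4]]]]]]]]]] :=
  family_parameters.
exists a1, a2, a3, a4, b1, b2, b3, b4; apply: kraus_tensor_eq_half => i j k l.
case: (ord2 i) => ->; case: (ord2 j) => ->; case: (ord2 k) => ->; case: (ord2 l) => -> //= _.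
all: rewrite ?tensor_diag ?kraus_tensor_diag ?tensor_cross_diag -?t1 -?t2 -?t3 -?t4.
all: rewrite -?wa13 -?wa24 -?wb14 -?wb23 /kraus_tensor !big_cons !big_nil !mxE /=.
all: rewrite ?conjc0 ?conjc_real ?sqnorm_real; try congr (_%:C%C); ring.
Qed.

End IncoherentQubitFamily.

Theorem proposition1 (R : realType) (Phi : 'M[R[i]]_2 -> 'M[R[i]]_2) :
  incoherent_operation Phi ->
  exists (a1 a2 a3 a4 : R) (b1 b2 b3 b4 : R[i]),
    [/\ a1 ^+ 2 + a2 ^+ 2 + a3 ^+ 2 + a4 ^+ 2 = 1,
        `|b1| ^+ 2 + `|b2| ^+ 2 + `|b3| ^+ 2 + `|b4| ^+ 2 = 1,
        (a1%:C)%C * b1 + (a2%:C)%C * b2 = 0 &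
        forall rho : 'M[R[i]]_2,
          Phi rho = K1 a1 b1 *m rho *m adj_mx (K1 a1 b1)
                  + K2 a2 b2 *m rho *m adj_mx (K2 a2 b2)
                  + K3 a3 b3 *m rho *m adj_mx (K3 a3 b3)
                  + K4 a4 b4 *m rho *m adj_mx (K4 a4 b4)].
Proof.
case=> Ks [Ks_incoherent Ks_unital Phi_Ks].
have [a1 [a2 [a3 [a4 [b1 [b2 [b3 [b4 sameT]]]]]]]] :=
  family_canonical Ks_incoherent Ks_unital.
have [same_map same_unit] := kraus_map_tensor sameT.
have [sum_a sum_b orth] := canonical_family_unital (etrans (esym same_unit) Ks_unital).
exists a1, a2, a3, a4, b1, b2, b3, b4; split => // rho.
by rewrite Phi_Ks same_map canonical_family_map.
Qed.
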